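(* Let $A>1$. If a subset $B\subset(\mathbf R_{\ge0})^2$ contains no $(A+1)$-subgeometric sequence (i.e. there is no $(A+1)$-subgeometric sequence all of whose terms lie in $B$), then $B$ is $A$-small.
   Context: $(\mathbf R_{\ge0})^2$ carries the norm $\|(x,y)\|=x+y$ and associated $\ell^1$ distance; $\mathrm{diam}$ denotes diameter for this distance. For $U\subset(\mathbf R_{\ge0})^2$, $m_U=\inf\{\|(x,y)\|:(x,y)\in U\}$. A sequence $(U_n)$ of subsets is disjointly unbounded if $U_{n+1}\cap\bigcup_{i\le n}U_i=\emptyset$ for all $n$ and $m_{U_n}\to\infty$; it is $A$-bounded if $\mathrm{diam}(U_n\cup U_{n-1})\le A\cdot m_{U_{n-1}}$ for all $n$. $B$ is $A$-small if for every disjointly unbounded $A$-bounded sequence $(U_n)$ there exists $n_0$ with $U_{n_0}\cap B=\emptyset$. For a real $A'>0$, a sequence $((x_n,y_n))_{n\in\mathbf N}$ in $(\mathbf R_{\ge0})^2$ is $A'$-subgeometric if $\|(x_n,y_n)\|\to\infty$ and there is $n_0$ such that $\|(x_n,y_n)\|\le A'\|(x_{n-1},y_{n-1})\|$ for all $n\ge n_0$. *)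

From Stdlib Require Import Reals.
From Coquelicot Require Import Coquelicot.
Open Scope R_scope.

Definition quadrant (p : R * R) : Prop := 0 <= fst p /\ 0 <= snd p.
Definition in_quadrant (U : R * R -> Prop) : Prop := forall p, U p -> quadrant p.

Definition nrm (p : R * R) : R := fst p + snd p.
Definition dist1 (p q : R * R) : R := Rabs (fst p - fst q) + Rabs (snd p - snd q).

(* m_U = inf { ||p|| : p in U }  (= +oo for empty U) *)
Definition mU (U : R * R -> Prop) : Rbar := Glb_Rbar (fun r => exists p, U p /\ r = nrm p).

Definition diam (U : R * R -> Prop) : Rbar :=
  Lub_Rbar (fun r => exists p q, U p /\ U q /\ r = dist1 p q).

Definition setU2 (U V : R * R -> Prop) : R * R -> Prop := fun p => U p \/ V p.

Definition disjointly_unbounded (U : nat -> R * R -> Prop) : Prop :=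
  (forall n p, U (S n) p -> ~ (exists i, (i <= n)%nat /\ U i p)) /\
  (forall M : R, exists N, forall n, (N <= n)%nat -> Rbar_le M (mU (U n))).

Definition A_bounded (A : R) (U : nat -> R * R -> Prop) : Prop :=
  forall n, (1 <= n)%nat ->
    Rbar_le (diam (setU2 (U n) (U (n - 1)%nat))) (Rbar_mult A (mU (U (n - 1)%nat))).

Definition A_small (A : R) (B : R * R -> Prop) : Prop :=
  forall U : nat -> R * R -> Prop,
    (forall n, in_quadrant (U n)) ->
    disjointly_unbounded U -> A_bounded A U ->
    exists n0, forall p, ~ (U n0 p /\ B p).

Definition subgeometric (A' : R) (x : nat -> R * R) : Prop :=
  (forall n, quadrant (x n)) /\
  is_lim_seq (fun n => nrm (x n)) p_infty /\
  (exists n0, forall n, (n0 <= n)%nat -> (1 <= n)%nat ->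
     nrm (x n) <= A' * nrm (x (n - 1)%nat)).

(** If [B] were not [A]-small, some admissible sequence [(U_n)] would meet [B]
    in every term; choosing [x_n] in [U_n ∩ B] gives a sequence in [B].  Its
    norms tend to infinity because [||x_n|| >= m_{U_n}], and it is
    [(A+1)]-subgeometric because
    [||x_n|| <= ||x_{n-1}|| + d(x_n, x_{n-1}) <= ||x_{n-1}|| + A m_{U_{n-1}}
     <= (A+1) ||x_{n-1}||]. *)

From Stdlib Require Import Reals Lra Classical ClassicalEpsilon.
From Coquelicot Require Import Coquelicot.
Open Scope R_scope.

Lemma mU_le_nrm (U : R * R -> Prop) (p : R * R) :
  U p -> Rbar_le (mU U) (nrm p).
Proof.
  intro Up. apply (Glb_Rbar_correct (fun r => exists p, U p /\ r = nrm p)).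
  now exists p.
Qed.

Lemma dist1_le_diam (U : R * R -> Prop) (p q : R * R) :
  U p -> U q -> Rbar_le (dist1 p q) (diam U).
Proof.
  intros Up Uq. apply (Lub_Rbar_correct (fun r => exists p q, U p /\ U q /\ r = dist1 p q)).
  now exists p, q.
Qed.

Lemma nrm_le_add_dist1 (p q : R * R) : nrm p <= nrm q + dist1 p q.
Proof.
  destruct p as [a b], q as [c d]; unfold nrm, dist1; simpl.
  pose proof (Rle_abs (a - c)); pose proof (Rle_abs (b - d)); lra.
Qed.

Lemma nrm_le_of_diam_le_mult_mU (A : R) (U V : R * R -> Prop) (p q : R * R) :
  0 < A -> U p -> V q ->
  Rbar_le (diam (setU2 U V)) (Rbar_mult A (mU V)) ->
  nrm p <= (A + 1) * nrm q.
Proof.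
  intros A_gt0 Up Vq bounded.
  pose proof (dist1_le_diam (setU2 U V) p q (or_introl Up) (or_intror Vq)) as dist_le.
  pose proof (mU_le_nrm V q Vq) as mV_le.
  pose proof (nrm_le_add_dist1 p q) as triangle.
  destruct (mU V) as [m | |]; simpl in mV_le; try contradiction.
  - destruct (diam (setU2 U V)) as [d | |]; simpl in *; try contradiction.
    assert (A * m <= A * nrm q) by (apply Rmult_le_compat_l; lra).
    lra.
  - simpl in bounded. destruct (Rle_dec 0 A); [|lra].
    destruct (Rle_lt_or_eq_dec 0 A); [|lra].
    destruct (diam (setU2 U V)); simpl in *; contradiction.
Qed.

Lemma is_lim_seq_nrm_p_infty (U : nat -> R * R -> Prop) (x : nat -> R * R) :
  (forall n, U n (x n)) ->
  (forall M : R, exists N, forall n, (N <= n)%nat -> Rbar_le M (mU (U n))) ->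
  is_lim_seq (fun n => nrm (x n)) p_infty.
Proof.
  intros Ux unbounded. apply is_lim_seq_spec. intro M.
  destruct (unbounded (M + 1)) as [N HN]. exists N. intros n Hn.
  pose proof (Rbar_le_trans _ _ _ (HN n Hn) (mU_le_nrm (U n) (x n) (Ux n))) as M_le.
  simpl in M_le. lra.
Qed.

Theorem lemmaA (A : R) (B : R * R -> Prop) :
  1 < A ->
  in_quadrant B ->
  ~ (exists x : nat -> R * R, subgeometric (A + 1) x /\ forall n, B (x n)) ->
  A_small A B.
Proof.
  intros A_gt1 B_quadrant no_subgeometric U _ [_ unbounded] bounded.
  apply NNPP. intro not_avoided.
  assert (meets : forall n, exists p, U n p /\ B p).
  { intro n. apply NNPP. intro Hn. apply not_avoided. exists n.
    intros p Hp. apply Hn. now exists p. }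
  destruct (choice _ meets) as [x Ux].
  apply no_subgeometric. exists x.
  split; [split; [|split] | intro n; apply Ux].
  - intro n. apply B_quadrant, Ux.
  - apply (is_lim_seq_nrm_p_infty U); [intro n; apply Ux | exact unbounded].
  - exists 1%nat. intros n _ n_ge1.
    apply (nrm_le_of_diam_le_mult_mU A (U n) (U (n - 1)%nat)); [lra | apply Ux | apply Ux |].
    exact (bounded n n_ge1).
Qed.
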